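(* Let $A,B\in\mathbb{Z}$ with $4A^3+27B^2\ne0$, let $M$ be a positive integer with $\max\{10\sqrt{|A|},5\sqrt[3]{|B|}\}\le M$, let $D$ be a squarefree positive integer and $E_D: y^2=x^3+D^2Ax+D^3B$. Let $P,Q$ be points of $E_D$ with integer coordinates satisfying $MD\le x(P)<x(Q)$. Then \[h(P+Q)\le h(P)+2h(Q)+2.9.\]
   Context: $h$ is the absolute logarithmic Weil height on $\overline{\mathbb{Q}}$, and for a point $P$ on $E_D$, $h(P)=h(x(P))$. *)

From HB Require Import structures.
From mathcomp Require Import all_boot all_order all_algebra.
From mathcomp Require Import all_classical all_reals all_analysis.
Set Implicit Arguments. Unset Strict Implicit. Unset Printing Implicit Defensive.
Import Order.TTheory GRing.Theory Num.Theory.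
Local Open Scope ring_scope.

Definition squarefree (n : nat) : Prop :=
  forall p : nat, prime p -> ~~ (p * p %| n)%N.

(* Points of a short Weierstrass curve y^2 = x^3 + a x + b over Q:
   None is the point at infinity O, Some (x, y) an affine point. *)
Definition ecpt := option (rat * rat).

Definition ec_add (a b : rat) (P Q : ecpt) : ecpt :=
  match P, Q with
  | None, _ => Q
  | _, None => P
  | Some (x1, y1), Some (x2, y2) =>
      if x1 == x2 then
        if y1 == - y2 then None
        else let l := (3 * x1 ^+ 2 + a) / (2 * y1) in
             let x3 := l ^+ 2 - x1 - x2 in
             Some (x3, l * (x1 - x3) - y1)
      else let l := (y2 - y1) / (x2 - x1) in
           let x3 := l ^+ 2 - x1 - x2 in
           Some (x3, l * (x1 - x3) - y1)
  end.

Definition heightQ (R : realType) (q : rat) : R :=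
  ln ((Num.max `|numq q| (denq q))%:~R).

Definition ptheight (R : realType) (P : ecpt) : R :=
  match P with None => 0 | Some (x, _) => heightQ R x end.

From HB Require Import structures.
From mathcomp Require Import all_boot all_order all_algebra.
From mathcomp Require Import all_classical all_reals all_analysis.
From mathcomp Require Import ring lra.
Import Order.TTheory GRing.Theory Num.Theory.
Set Implicit Arguments.
Unset Strict Implicit.
Unset Printing Implicit Defensive.
Local Open Scope ring_scope.

(* Since x(P) != x(Q), x(P+Q) = N / (x2 - x1)^2 with
   N = (y2 - y1)^2 - (x1 + x2)(x2 - x1)^2.  The hypothesis x1 >= M D makes the
   twisted coefficients small, 100 |D^2 A| <= x1^2 and 125 |D^3 B| <= x1^3, so
   y_i^2 <= 51/50 x_i^3, and expanding N with the curve equations gives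
   |N| <= 5 x1 x2^2; the denominator is at most x2^2.  Hence
   h(P+Q) <= ln (5 x1 x2^2) = h(P) + 2 h(Q) + ln 5, and ln 5 < 2.9. *)

Lemma expr_le_of_root_le (R : realDomainType) (n : nat) (c t x M : R) :
  0 <= c -> 0 <= t -> t ^+ n = x -> c * t <= M -> c ^+ n * x <= M ^+ n.
Proof.
move=> c_ge0 t_ge0 <- ctM; rewrite -exprMn lerXn2r ?nnegrE ?mulr_ge0 //.
exact: le_trans (mulr_ge0 c_ge0 t_ge0) ctM.
Qed.

Lemma powRVn_expn (R : realType) (n : nat) (x : R) : (0 < n)%N -> 0 <= x ->
  (x `^ n%:R^-1) ^+ n = x.
Proof.
move=> n_gt0 x_ge0.
by rewrite -powR_mulrn ?powR_ge0 // -powRrM mulVf ?pnatr_eq0 -?lt0n // powRr1.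
Qed.

Lemma scaled_coef_le (R : realDomainType) (n : nat) (c M D X u : R) :
  0 <= M -> 0 <= D -> M * D <= X -> c * `|u| <= M ^+ n ->
  c * `|D ^+ n * u| <= X ^+ n.
Proof.
move=> M_ge0 D_ge0 MDX cuM.
rewrite normrM normrX (ger0_norm D_ge0) mulrCA.
apply: le_trans (ler_wpM2l (exprn_ge0 n D_ge0) cuM) _.
by rewrite -exprMn mulrC lerXn2r ?nnegrE ?mulr_ge0 // (le_trans _ MDX) ?mulr_ge0.
Qed.

Lemma twist_coef_bounds (R : realType) (A B : int) (M D : nat) (X : R) :
  Num.max (10 * Num.sqrt (`|A|%:~R : R)) (5 * powR (`|B|%:~R : R) 3^-1) <= M%:R ->
  (M * D)%:R <= X ->
  100 * `|((D%:Z) ^+ 2 * A)%:~R : R| <= X ^+ 2 /\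
  125 * `|((D%:Z) ^+ 3 * B)%:~R : R| <= X ^+ 3.
Proof.
rewrite ge_max natrM => /andP[hA hB] hX.
have normA : 100 * `|A%:~R| <= M%:R ^+ 2 :> R.
  rewrite -intr_norm (_ : 100 = 10 ^+ 2); last by rewrite -natrX.
  apply: expr_le_of_root_le hA; rewrite ?sqrtr_ge0 //.
  by rewrite sqr_sqrtr ?ler0z.
have normB : 125 * `|B%:~R| <= M%:R ^+ 3 :> R.
  rewrite -intr_norm (_ : 125 = 5 ^+ 3); last by rewrite -natrX.
  apply: expr_le_of_root_le hB; rewrite ?powR_ge0 //.
  by rewrite powRVn_expn ?ler0z.
split; rewrite rmorphM rmorphXn.
- exact: scaled_coef_le (ler0n _ M) (ler0n _ D) hX normA.
- exact: scaled_coef_le (ler0n _ M) (ler0n _ D) hX normB.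
Qed.

Section ShortWeierstrass.
Variables (R : realFieldType) (a b : R).

Lemma weierstrass_rhs_le (X : R) : 0 <= X ->
  100 * `|a| <= X ^+ 2 -> 125 * `|b| <= X ^+ 3 ->
  X ^+ 3 + a * X + b <= 51 / 50 * X ^+ 3.
Proof.
move=> X0 ha hb.
have haX : a * X <= `|a| * X by rewrite ler_wpM2r ?ler_norm.
have := ler_norm b; nra.
Qed.

Lemma norm_mul_ordinates_le (X1 X2 Y1 Y2 : R) : 0 <= X1 -> X1 <= X2 ->
  Y1 ^+ 2 <= 51 / 50 * X1 ^+ 3 -> Y2 ^+ 2 <= 51 / 50 * X2 ^+ 3 ->
  `|Y1 * Y2| <= 51 / 50 * (X1 * X2 ^+ 2).
Proof.
move=> X10 X12 hY1 hY2.
have X20 : 0 <= X2 by exact: le_trans X12.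
rewrite -(ler_pXn2r (n := 2)) ?nnegrE ?mulr_ge0 ?exprn_ge0 //.
rewrite real_normK ?num_real // !exprMn.
have X33 : X1 ^+ 3 * X2 ^+ 3 <= X1 ^+ 2 * X2 ^+ 4.
  have : 0 <= X1 ^+ 2 * X2 ^+ 3 by rewrite mulr_ge0 ?exprn_ge0.
  have -> : X1 ^+ 2 * X2 ^+ 4 = X1 ^+ 2 * X2 ^+ 3 * X2 by ring.
  have -> : X1 ^+ 3 * X2 ^+ 3 = X1 ^+ 2 * X2 ^+ 3 * X1 by ring.
  nra.
have : Y1 ^+ 2 * Y2 ^+ 2 <= 51 / 50 * X1 ^+ 3 * (51 / 50 * X2 ^+ 3).
  by apply: ler_pM; rewrite ?sqr_ge0.
nra.
Qed.

Lemma chord_numerator_le (X1 X2 Y1 Y2 : R) : 0 < X1 -> X1 < X2 ->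
  100 * `|a| <= X1 ^+ 2 -> 125 * `|b| <= X1 ^+ 3 ->
  Y1 ^+ 2 = X1 ^+ 3 + a * X1 + b -> Y2 ^+ 2 = X2 ^+ 3 + a * X2 + b ->
  `|(Y2 - Y1) ^+ 2 - (X1 + X2) * (X2 - X1) ^+ 2| <= 5 * (X1 * X2 ^+ 2).
Proof.
move=> X1_gt0 X12 ha hb e1 e2.
have X1_ge0 := ltW X1_gt0; have X2_gt0 := lt_trans X1_gt0 X12.
have X2_ge0 := ltW X2_gt0.
have sq12 : X1 ^+ 2 <= X2 ^+ 2 by rewrite lerXn2r ?nnegrE // ltW.
have cb12 : X1 ^+ 3 <= X2 ^+ 3 by rewrite lerXn2r ?nnegrE // ltW.
have E : (Y2 - Y1) ^+ 2 - (X1 + X2) * (X2 - X1) ^+ 2 =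
    X1 ^+ 2 * X2 + X1 * X2 ^+ 2 + a * (X1 + X2) + 2 * b - 2 * (Y1 * Y2).
  have -> : (Y2 - Y1) ^+ 2 = Y2 ^+ 2 + Y1 ^+ 2 - 2 * (Y1 * Y2) by ring.
  by rewrite e1 e2; ring.
have hY1 : Y1 ^+ 2 <= 51 / 50 * X1 ^+ 3 by rewrite e1 weierstrass_rhs_le.
have hY2 : Y2 ^+ 2 <= 51 / 50 * X2 ^+ 3.
  by rewrite e2 weierstrass_rhs_le // (le_trans ha, le_trans hb).
have hYY := norm_mul_ordinates_le X1_ge0 (ltW X12) hY1 hY2.
have hX : X1 ^+ 2 * X2 <= X1 * X2 ^+ 2.
  have : 0 <= X1 * X2 * (X2 - X1) by rewrite !mulr_ge0 // subr_ge0 ltW.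
  nra.
have hA : `|a * (X1 + X2)| <= 1 / 50 * (X1 * X2 ^+ 2).
  rewrite normrM (ger0_norm (addr_ge0 X1_ge0 X2_ge0)).
  have : `|a| * (X1 + X2) <= X1 ^+ 2 / 100 * (X1 + X2).
    by rewrite ler_wpM2r ?addr_ge0 //; lra.
  nra.
have hB : `|b| <= 1 / 125 * (X1 * X2 ^+ 2) by nra.
move: hA hB hYY; rewrite E !ler_norml => /andP[? ?] /andP[? ?] /andP[? ?].
apply/andP; split; nra.
Qed.
End ShortWeierstrass.

Lemma chord_denominator_le (R : realFieldType) (X1 X2 : R) : 1 <= X1 -> X1 < X2 ->
  (X2 - X1) ^+ 2 <= 5 * (X1 * X2 ^+ 2).
Proof.
move=> X1_ge1 X12.
have : (X2 - X1) ^+ 2 <= X2 ^+ 2 by rewrite lerXn2r ?nnegrE; lra.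
have : X2 ^+ 2 <= X1 * X2 ^+ 2 by rewrite ler_peMl ?sqr_ge0.
have := sqr_ge0 X2; nra.
Qed.

Lemma ln5_le (R : realType) : ln (5 : R) <= 29 / 10.
Proof.
rewrite -ler_expR lnK ?posrE //.
apply: le_trans (expR_ge1Dxn 2 _); last lra.
rewrite (_ : 3`! = 6)%N // !exprS expr0.
lra.
Qed.

Lemma heightQ_int (R : realType) (x : int) : 1 <= x -> heightQ R x%:~R = ln (x%:~R : R).
Proof.
move=> x_ge1; rewrite /heightQ numq_int denq_int.
by rewrite (gtr0_norm (lt_le_trans ltr01 x_ge1)) (max_l x_ge1).
Qed.

Lemma heightQ_divz_le (R : realType) (n d : int) (C : R) : d != 0 ->
  `|n|%:~R <= C -> `|d|%:~R <= C -> heightQ R (n%:~R / d%:~R) <= ln C.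
Proof.
move=> d_neq0 nC dC.
have -> : (n%:~R / d%:~R : rat) = fracq (n, d) by rewrite fracqE.
rewrite /heightQ.
have d_gt0 : 0 < (`|d|%:~R : R) by rewrite ltr0z normr_gt0.
have C_gt0 := lt_le_trans d_gt0 dC.
rewrite ler_ln ?posrE ?ltr0z ?lt_max ?denq_gt0 ?orbT // maxEle.
case: ifP => _; [apply: le_trans dC | apply: le_trans nC]; rewrite ler_int.
- by rewrite den_fracq /= d_neq0 -[leRHS]abszE lez_nat leq_div.
- rewrite num_fracq /= d_neq0 normrM normr_sign mul1r.
  by rewrite -[leRHS]abszE lez_nat leq_div.
Qed.

Lemma ptheight_add_chord (R : realType) (a b x1 y1 x2 y2 : rat) : x1 != x2 ->
  ptheight R (ec_add a b (Some (x1, y1)) (Some (x2, y2))) =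
  heightQ R (((y2 - y1) / (x2 - x1)) ^+ 2 - x1 - x2).
Proof. by move=> /negbTE /= ->. Qed.

Lemma chord_x_intrE (F : numFieldType) (x1 y1 x2 y2 : int) : x1 != x2 ->
  ((y2%:~R - y1%:~R) / (x2%:~R - x1%:~R)) ^+ 2 - x1%:~R - x2%:~R =
  ((y2 - y1) ^+ 2 - (x1 + x2) * (x2 - x1) ^+ 2)%:~R / ((x2 - x1) ^+ 2)%:~R :> F.
Proof.
move=> x12; rewrite !(rmorphB, rmorphM, rmorphXn, rmorphD) /=.
by field; rewrite subr_eq0 eqr_int eq_sym.
Qed.

Theorem lemma3p9 (R : realType) (A B : int) (M D : nat) (x1 y1 x2 y2 : int) :
  4 * A ^+ 3 + 27 * B ^+ 2 != 0 ->
  (0 < M)%N ->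
  Num.max (10 * Num.sqrt (`|A|%:~R : R)) (5 * powR (`|B|%:~R : R) (3^-1))
    <= (M%:R : R) ->
  (0 < D)%N -> squarefree D ->
  y1 ^+ 2 = x1 ^+ 3 + (D%:Z) ^+ 2 * A * x1 + (D%:Z) ^+ 3 * B ->
  y2 ^+ 2 = x2 ^+ 3 + (D%:Z) ^+ 2 * A * x2 + (D%:Z) ^+ 3 * B ->
  ((M * D)%:Z <= x1) -> x1 < x2 ->
  let a : rat := ((D%:Z) ^+ 2 * A)%:~R in
  let b : rat := ((D%:Z) ^+ 3 * B)%:~R in
  let P : ecpt := Some (x1%:~R, y1%:~R) in
  let Q : ecpt := Some (x2%:~R, y2%:~R) in
  ptheight R (ec_add a b P Q) <= ptheight R P + 2 * ptheight R Q + 29 / 10.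
Proof.
move=> _ M_gt0 hMAB D_gt0 _ e1 e2 hx1 x12; cbv zeta.
have x1_ge1 : 1 <= x1 by apply: le_trans hx1; rewrite lez_nat muln_gt0 M_gt0.
have x2_ge1 := le_trans x1_ge1 (ltW x12).
have x1_neq_x2 : x1 != x2 by rewrite lt_eqF.
rewrite ptheight_add_chord ?eqr_int // chord_x_intrE //.
rewrite [ptheight _ (Some (x1%:~R, _))]/= [ptheight _ (Some (x2%:~R, _))]/= !heightQ_int //.
set X1 : R := x1%:~R; set X2 : R := x2%:~R.
have X1_ge1 : 1 <= X1 by rewrite ler1z.
have X12 : X1 < X2 by rewrite ltr_int.
have X1_gt0 : 0 < X1 by rewrite ltr0z.
have X2_gt0 : 0 < X2 by rewrite ltr0z.
have [ha hb] : 100 * `|((D%:Z) ^+ 2 * A)%:~R : R| <= X1 ^+ 2 /\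
               125 * `|((D%:Z) ^+ 3 * B)%:~R : R| <= X1 ^+ 3.
  by apply: twist_coef_bounds hMAB _; rewrite -(ler_int R) in hx1.
have curveR (x y : int) : y ^+ 2 = x ^+ 3 + (D%:Z) ^+ 2 * A * x + (D%:Z) ^+ 3 * B ->
    (y%:~R : R) ^+ 2 = x%:~R ^+ 3 + ((D%:Z) ^+ 2 * A)%:~R * x%:~R + ((D%:Z) ^+ 3 * B)%:~R.
  by move=> e; rewrite -!rmorphXn -!rmorphM -!rmorphD e.
have hN := chord_numerator_le X1_gt0 X12 ha hb (curveR _ _ e1) (curveR _ _ e2).
apply: le_trans (heightQ_divz_le (C := 5 * (X1 * X2 ^+ 2)) _ _ _) _.
- by rewrite expf_neq0 // subr_eq0 eq_sym.
- by rewrite intr_norm !(rmorphB, rmorphM, rmorphXn, rmorphD).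
- rewrite intr_norm rmorphXn rmorphB /= ger0_norm ?sqr_ge0 //.
  exact: chord_denominator_le.
rewrite lnM ?posrE ?mulr_gt0 ?exprn_gt0 // lnM ?posrE ?exprn_gt0 // lnXn //.
have := ln5_le R; lra.
Qed.
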